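(* Let $S$ be a self-adjoint subspace in $X^2$, and let $A$ and $S+A$ be closed Hermitian subspaces in $X^2$, with $D(S)\subset D(A)$. Let $Q:A(0)^\perp\to S(0)^\perp$ be the orthogonal projection (under these hypotheses $A(0)\subset S(0)$, so $S(0)^\perp\subset A(0)^\perp$). If $QA_s$ is $S_s$-bounded with $S_s$-bound less than $1$, then $S+A$ is a self-adjoint subspace in $X^2$.
   Context: $X$ is a complex Hilbert space and $X^2=X\times X$ carries the inner product $\langle (x,f),(y,g)\rangle=\langle x,y\rangle+\langle f,g\rangle$. A subspace $T$ in $X^2$ means a linear subspace of $X^2$ (a linear relation); a linear operator in $X$ is identified with its graph. Notation: $D(T)=\{x:(x,f)\in T \text{ for some } f\}$, $T(x)=\{f:(x,f)\in T\}$. The adjoint is $T^*=\{(y,g)\in X^2:\langle g,x\rangle=\langle y,f\rangle \text{ for all }(x,f)\in T\}$; $T$ is Hermitian if $T\subset T^*$ and self-adjoint if $T=T^*$. For subspaces $S,A$ in $X^2$, $S+A=\{(x,f+g):(x,f)\in S,(x,g)\in A\}$. For a closed subspace $T$, set $T_\infty=\{(0,g)\in X^2:(0,g)\in T\}$ and $T_s=T\ominus T_\infty$ (orthogonal complement of $T_\infty$ in $T$), so $T=T_s\oplus T_\infty$; $T_s$ is the graph of a linear operator (the operator part of $T$) with $D(T_s)=D(T)$ and $R(T_s)\subset T(0)^\perp$. For linear operators $U,V$ in $X$: $U$ is $V$-bounded if $D(V)\subset D(U)$ and there is $c\ge0$ with $\|Ux\|\le c(\|x\|+\|Vx\|)$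 for $x\in D(V)$; the $V$-bound of $U$ is the infimum of all $a\ge 0$ for which some $b\ge0$ satisfies $\|Ux\|\le a\|Vx\|+b\|x\|$ for all $x\in D(V)$. *)

From Stdlib Require Import Reals.
Open Scope R_scope.

Record C := mkC { Re : R; Im : R }.
Definition C0 : C := mkC 0 0.
Definition C1 : C := mkC 1 0.
Definition Cadd (a b : C) : C := mkC (Re a + Re b) (Im a + Im b).
Definition Cmul (a b : C) : C :=
  mkC (Re a * Re b - Im a * Im b) (Re a * Im b + Im a * Re b).
Definition Cconj (a : C) : C := mkC (Re a) (- Im a).

Record Hilbert := {
  carrier :> Type;
  vzero : carrier;
  vadd : carrier -> carrier -> carrier;
  vopp : carrier -> carrier;
  vscal : C -> carrier -> carrier;
  ip : carrier -> carrier -> C;   (* <x,y>, linear in x, conjugate-linear in y *)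
  vadd_assoc : forall x y z, vadd x (vadd y z) = vadd (vadd x y) z;
  vadd_comm : forall x y, vadd x y = vadd y x;
  vadd_zero : forall x, vadd x vzero = x;
  vadd_opp : forall x, vadd x (vopp x) = vzero;
  vscal_one : forall x, vscal C1 x = x;
  vscal_assoc : forall a b x, vscal a (vscal b x) = vscal (Cmul a b) x;
  vscal_distr_v : forall a x y, vscal a (vadd x y) = vadd (vscal a x) (vscal a y);
  vscal_distr_s : forall a b x, vscal (Cadd a b) x = vadd (vscal a x) (vscal b x);
  ip_conj_sym : forall x y, ip y x = Cconj (ip x y);
  ip_add_l : forall x y z, ip (vadd x y) z = Cadd (ip x z) (ip y z);
  ip_scal_l : forall a x y, ip (vscal a x) y = Cmul a (ip x y);
  ip_pos_im : forall x, Im (ip x x) = 0;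
  ip_pos_re : forall x, 0 <= Re (ip x x);
  ip_definite : forall x, Re (ip x x) = 0 -> x = vzero;
  complete : forall u : nat -> carrier,
    (forall eps, eps > 0 -> exists N, forall n m, (n >= N)%nat -> (m >= N)%nat ->
        sqrt (Re (ip (vadd (u n) (vopp (u m))) (vadd (u n) (vopp (u m))))) < eps) ->
    exists l, forall eps, eps > 0 -> exists N, forall n, (n >= N)%nat ->
        sqrt (Re (ip (vadd (u n) (vopp l)) (vadd (u n) (vopp l)))) < eps
}.

Arguments vzero {h}.
Arguments vadd {h}.
Arguments vopp {h}.
Arguments vscal {h}.
Arguments ip {h}.

Section HilbertDefs.
Variable X : Hilbert.

Definition vsub (x y : X) : X := vadd x (vopp y).
Definition norm (x : X) : R := sqrt (Re (ip x x)).

(* A "subspace in X^2" = linear relation, represented by its membership predicate *)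
Definition rel := X -> X -> Prop.

Definition is_subspace (T : rel) : Prop :=
  T vzero vzero /\
  (forall x f y g, T x f -> T y g -> T (vadd x y) (vadd f g)) /\
  (forall a x f, T x f -> T (vscal a x) (vscal a f)).

(* norm on X^2 induced by the inner product <(x,f),(y,g)> = <x,y> + <f,g> *)
Definition norm2 (x f : X) : R := sqrt (Re (ip x x) + Re (ip f f)).

Definition closed_rel (T : rel) : Prop :=
  forall (u v : nat -> X) (x f : X),
    (forall n, T (u n) (v n)) ->
    (forall eps, eps > 0 -> exists N, forall n, (n >= N)%nat ->
        norm2 (vsub (u n) x) (vsub (v n) f) < eps) ->
    T x f.

Definition dom (T : rel) (x : X) : Prop := exists f, T x f.
Definition mul0 (T : rel) (f : X) : Prop := T vzero f.

Definition adjoint (T : rel) : rel :=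
  fun y g => forall x f, T x f -> ip g x = ip y f.

Definition rel_incl (T U : rel) : Prop := forall x f, T x f -> U x f.
Definition rel_eq (T U : rel) : Prop := forall x f, T x f <-> U x f.

Definition hermitian (T : rel) : Prop := rel_incl T (adjoint T).
Definition self_adjoint (T : rel) : Prop := rel_eq T (adjoint T).

Definition rel_sum (S A : rel) : rel :=
  fun x h => exists f g, S x f /\ A x g /\ h = vadd f g.

Definition orth (M : X -> Prop) : X -> Prop :=
  fun y => forall z, M z -> ip y z = C0.

(* T_s = T ⊖ T_inf, where T_inf = {(0,g) : (0,g) in T};
   (x,f) ⊥ (0,g) in X^2 iff <f,g> = 0 *)
Definition op_part (T : rel) : rel :=
  fun x f => T x f /\ forall g, T vzero g -> Cadd (ip x vzero) (ip f g) = C0.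

Definition orth_proj (M : X -> Prop) (y z : X) : Prop :=
  M z /\ forall w, M w -> ip (vsub y z) w = C0.

Definition rel_comp (Q : X -> X -> Prop) (U : rel) : rel :=
  fun x z => exists g, U x g /\ Q g z.

Definition rel_bounded (U V : rel) : Prop :=
  (forall x, dom V x -> dom U x) /\
  exists c, 0 <= c /\
    forall x y z, V x y -> U x z -> norm z <= c * (norm x + norm y).

(* admissible constants a for the V-bound of U *)
Definition bound_const (U V : rel) (a : R) : Prop :=
  0 <= a /\ exists b, 0 <= b /\
    forall x y z, V x y -> U x z -> norm z <= a * norm y + b * norm x.

Definition is_inf (P : R -> Prop) (m : R) : Prop :=
  (forall a, P a -> m <= a) /\ (forall m', (forall a, P a -> m' <= a) -> m' <= m).

Definition rel_bound_lt (U V : rel) (r : R) : Prop :=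
  exists beta, is_inf (bound_const U V) beta /\ beta < r.

End HilbertDefs.

Arguments vsub {X}.
Arguments norm {X}.

From Stdlib Require Import Reals Lra Psatz Classical ClassicalEpsilon.
Open Scope R_scope.

(* A closed Hermitian relation T is self-adjoint once R(T - it) and R(T + it) are the whole
   space.  These ranges are closed because |f - itx|^2 = |f|^2 + t^2 |x|^2 for (x, f) in T,
   so it suffices that their orthogonal complements vanish.  For T = S + A, a vector v
   orthogonal to R(T - it) is orthogonal to S(0), hence v = f - itx with (x, f) in S_s, as S
   is self-adjoint.  Testing v against (x, f + g) with (x, g) in A_s gives
   |v| <= |Q g| <= a|f| + b|x| <= (a + b/|t|)|v|, which forces v = 0 once |t| > b/(1 - a). *)

Definition Copp (a : C) : C := mkC (- Re a) (- Im a).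
Definition Cr (r : R) : C := mkC r 0.
Definition Ci (t : R) : C := mkC 0 t.

Lemma C_ext (a b : C) : Re a = Re b -> Im a = Im b -> a = b.
Proof. destruct a, b; simpl; intros; subst; reflexivity. Qed.

Ltac cunf := unfold Cadd, Cmul, Cconj, Copp, C0, C1, Cr, Ci in *; simpl in *.
Ltac ceq := apply C_ext; cunf; ring.

Lemma inv_INR_succ_eventually_lt eps : 0 < eps ->
  exists N, forall n, (n >= N)%nat -> / (INR n + 1) < eps.
Proof.
  intro He. destruct (INR_archimed eps 1 He) as [N HN]. exists N. intros n Hn.
  apply le_INR in Hn. pose proof (pos_INR N).
  apply (Rmult_lt_reg_l (INR n + 1)); [lra|]. rewrite Rinv_r by lra. nra.
Qed.

Lemma is_inf_lt (P : R -> Prop) m r : is_inf P m -> m < r -> exists a, P a /\ a < r.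
Proof.
  intros [_ Hglb] Hmr. apply NNPP. intro Hno.
  assert (r <= m) by (apply Hglb; intros a Pa; apply Rnot_lt_le; intro; apply Hno; eauto).
  lra.
Qed.

Lemma nonneg_inf_exists (E : R -> Prop) : (exists r, E r) -> (forall r, E r -> 0 <= r) ->
  exists d, 0 <= d /\ (forall r, E r -> d <= r) /\
    (forall eps, 0 < eps -> exists r, E r /\ r < d + eps).
Proof.
  intros [r0 Er0] Hpos.
  destruct (completeness (fun r => E (- r))) as [L [Hub Hlub]].
  - exists 0. intros r Er. specialize (Hpos _ Er). lra.
  - exists (- r0). rewrite Ropp_involutive. exact Er0.
  - exists (- L). split; [|split].
    + assert (L <= 0); [|lra]. apply Hlub. intros r Er. specialize (Hpos _ Er). lra.
    + intros r Er. assert (- r <= L); [|lra]. apply Hub. rewrite Ropp_involutive. exact Er.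
    + intros eps He. apply NNPP. intro Hno.
      assert (L <= L - eps); [|lra]. apply Hlub. intros r Er.
      apply Rnot_lt_le. intro. apply Hno. exists (- r). split; [exact Er | lra].
Qed.

Lemma lin_coef_eq0_of_quad_ge0 p w : 0 <= w -> (forall s, 0 <= - 2 * s * p + s * s * w) -> p = 0.
Proof.
  intros Hw H. set (k := / (w + 1)).
  assert (Hk : k * (w + 1) = 1) by (unfold k; field; lra).
  assert (Hk0 : 0 < k) by (unfold k; apply Rinv_0_lt_compat; lra).
  specialize (H (p * k)). assert (0 <= - p * p * k * (1 + k)) by nra. nra.
Qed.

Section Hilbert_space.
Variable X : Hilbert.

Lemma vadd_zero_l (x : X) : vadd vzero x = x.
Proof. rewrite vadd_comm; apply vadd_zero. Qed.

Lemma ip_zero_l (y : X) : ip vzero y = C0.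
Proof.
  pose proof (ip_add_l X vzero vzero y) as H. rewrite vadd_zero in H.
  destruct (ip vzero y) as [a b]. cunf. injection H; intros. apply C_ext; simpl; lra.
Qed.

Lemma ip_opp_l (x y : X) : ip (vopp x) y = Copp (ip x y).
Proof.
  pose proof (ip_add_l X x (vopp x) y) as H. rewrite vadd_opp, ip_zero_l in H.
  apply C_ext; cunf; injection H; intros; lra.
Qed.

Lemma ip_add_r (x y z : X) : ip x (vadd y z) = Cadd (ip x y) (ip x z).
Proof. rewrite ip_conj_sym, ip_add_l, (ip_conj_sym X y x), (ip_conj_sym X z x). ceq. Qed.

Lemma ip_scal_r a (x y : X) : ip x (vscal a y) = Cmul (Cconj a) (ip x y).
Proof. rewrite ip_conj_sym, ip_scal_l, (ip_conj_sym X y x). ceq. Qed.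

Lemma ip_opp_r (x y : X) : ip x (vopp y) = Copp (ip x y).
Proof. rewrite ip_conj_sym, ip_opp_l, (ip_conj_sym X y x). ceq. Qed.

Lemma ip_zero_r (y : X) : ip y vzero = C0.
Proof. rewrite ip_conj_sym, ip_zero_l. ceq. Qed.

Lemma ip_sub_l (x y z : X) : ip (vsub x y) z = Cadd (ip x z) (Copp (ip y z)).
Proof. unfold vsub. rewrite ip_add_l, ip_opp_l. reflexivity. Qed.

Lemma ip_sub_r (x y z : X) : ip z (vsub x y) = Cadd (ip z x) (Copp (ip z y)).
Proof. unfold vsub. rewrite ip_add_r, ip_opp_r. reflexivity. Qed.

Ltac ipexp := repeat rewrite ?ip_add_l, ?ip_add_r, ?ip_scal_l, ?ip_scal_r, ?ip_opp_l,
  ?ip_opp_r, ?ip_sub_l, ?ip_sub_r, ?ip_zero_l, ?ip_zero_r.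

Lemma Re_ip_sym (x y : X) : Re (ip y x) = Re (ip x y).
Proof. rewrite ip_conj_sym; reflexivity. Qed.

Lemma Im_ip_sym (x y : X) : Im (ip y x) = - Im (ip x y).
Proof. rewrite ip_conj_sym; reflexivity. Qed.

Lemma vsub_eq0 (u v : X) : vsub u v = vzero -> u = v.
Proof.
  unfold vsub; intro H.
  rewrite <- (vadd_zero X u), <- (vadd_opp X v), (vadd_comm X v), vadd_assoc, H.
  apply vadd_zero_l.
Qed.

Lemma vector_ext (u v : X) : (forall w, ip u w = ip v w) -> u = v.
Proof. intro H. apply vsub_eq0, ip_definite. rewrite ip_sub_l, H. cunf. ring. Qed.

Ltac veq := apply vector_ext; let w := fresh "w" in intro w; ipexp; apply C_ext; cunf; field.

Definition sqnorm (x : X) : R := Re (ip x x).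

Lemma sqnorm_ge0 (x : X) : 0 <= sqnorm x.
Proof. apply ip_pos_re. Qed.

Lemma norm_ge0 (x : X) : 0 <= norm x.
Proof. apply sqrt_pos. Qed.

Lemma norm_sqr (x : X) : norm x * norm x = sqnorm x.
Proof. apply sqrt_sqrt, sqnorm_ge0. Qed.

Lemma norm_eq0 (x : X) : norm x = 0 -> x = vzero.
Proof. intro H. apply ip_definite. fold (sqnorm x). rewrite <- norm_sqr, H. ring. Qed.

Lemma sqnorm_scal a (x : X) : sqnorm (vscal a x) = (Re a * Re a + Im a * Im a) * sqnorm x.
Proof. unfold sqnorm. ipexp. pose proof (ip_pos_im X x). cunf. rewrite H. ring. Qed.

Lemma norm_scal_Ci t (x : X) : norm (vscal (Ci t) x) = Rabs t * norm x.
Proof.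
  unfold norm. fold (sqnorm (vscal (Ci t) x)) (sqnorm x). rewrite sqnorm_scal.
  cunf. rewrite sqrt_mult_alt by nra. rewrite Rmult_0_l, Rplus_0_l.
  fold (Rsqr t). rewrite sqrt_Rsqr_abs. reflexivity.
Qed.

Lemma norm_opp (x : X) : norm (vopp x) = norm x.
Proof. unfold norm. ipexp. cunf. f_equal. ring. Qed.

Lemma Re_ip_le_sqnorm (a b : X) e : 0 < e -> 2 * Re (ip a b) <= e * sqnorm a + / e * sqnorm b.
Proof.
  intro He. pose proof (sqnorm_ge0 (vsub (vscal (Cr e) a) b)) as H.
  unfold sqnorm in *. revert H. ipexp. pose proof (ip_pos_im X a).
  cunf. rewrite (Re_ip_sym a b), (Im_ip_sym a b). intro H1.
  apply (Rmult_le_reg_l e); [exact He|].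
  replace (e * (e * Re (ip a a) + / e * Re (ip b b))) with (e * e * Re (ip a a) + Re (ip b b))
    by (field; lra).
  nra.
Qed.

Lemma Re_ip_le_norm (a b : X) : Re (ip a b) <= norm a * norm b.
Proof.
  pose proof (norm_ge0 a). pose proof (norm_ge0 b).
  destruct (Req_dec (norm a) 0) as [Ha|Ha].
  { rewrite Ha, (norm_eq0 a Ha), ip_zero_l. simpl. lra. }
  destruct (Req_dec (norm b) 0) as [Hb|Hb].
  { rewrite Hb, (norm_eq0 b Hb), ip_zero_r. simpl. lra. }
  pose proof (Re_ip_le_sqnorm a b (norm b / norm a) ltac:(apply Rdiv_lt_0_compat; lra)) as H1.
  rewrite <- !norm_sqr in H1.
  replace (norm b / norm a * (norm a * norm a) + / (norm b / norm a) * (norm b * norm b))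
    with (2 * (norm a * norm b)) in H1 by (field; lra).
  lra.
Qed.

Lemma Rabs_Re_ip_le (a b : X) : Rabs (Re (ip a b)) <= norm a * norm b.
Proof.
  pose proof (Re_ip_le_norm (vopp a) b). rewrite norm_opp, ip_opp_l in H. cunf.
  pose proof (Re_ip_le_norm a b). apply Rabs_le. lra.
Qed.

Lemma norm_le_of_ip_add_eq0 (v z : X) : ip (vadd v z) v = C0 -> norm v <= norm z.
Proof.
  (* [|v|^2 = - Re <z, v> <= |z| |v|] *)
  intro E. pose proof (Re_ip_le_norm (vopp z) v) as CS. rewrite norm_opp in CS.
  revert CS. apply (f_equal Re) in E. revert E. ipexp. cunf.
  pose proof (norm_sqr v). pose proof (norm_ge0 v). pose proof (norm_ge0 z).
  unfold sqnorm in *. intros. nra.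
Qed.

Lemma norm_triangle (a b : X) : norm (vadd a b) <= norm a + norm b.
Proof.
  pose proof (Re_ip_le_norm a b). pose proof (norm_ge0 a). pose proof (norm_ge0 b).
  pose proof (norm_ge0 (vadd a b)).
  assert (sqnorm (vadd a b) <= (norm a + norm b) * (norm a + norm b)).
  { unfold sqnorm at 1. ipexp. cunf. rewrite (Re_ip_sym a b).
    fold (sqnorm a) (sqnorm b). rewrite <- !norm_sqr. nra. }
  rewrite <- norm_sqr in H3. nra.
Qed.

Lemma norm_sub_sym (a b : X) : norm (vsub a b) = norm (vsub b a).
Proof. unfold norm. ipexp. cunf. f_equal. ring. Qed.

Lemma parallelogram (a b : X) :
  sqnorm (vadd a b) + sqnorm (vsub a b) = 2 * sqnorm a + 2 * sqnorm b.
Proof. unfold sqnorm. ipexp. cunf. ring. Qed.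

Lemma inv_INR_succ_bounds n : 0 < / (INR n + 1) <= 1.
Proof.
  pose proof (pos_INR n). split.
  - apply Rinv_0_lt_compat. lra.
  - rewrite <- Rinv_1. apply Rinv_le_contravar; lra.
Qed.

Definition converges (u : nat -> X) (l : X) : Prop :=
  forall eps, eps > 0 -> exists N, forall n, (n >= N)%nat -> norm (vsub (u n) l) < eps.

Definition cauchy_seq (u : nat -> X) : Prop :=
  forall eps, eps > 0 -> exists N, forall n k, (n >= N)%nat -> (k >= N)%nat ->
    norm (vsub (u n) (u k)) < eps.

Lemma cauchy_seq_converges (u : nat -> X) : cauchy_seq u -> exists l, converges u l.
Proof. exact (complete X u). Qed.

Lemma converges_cauchy_seq (u : nat -> X) l : converges u l -> cauchy_seq u.
Proof.
  intros Hu eps He. destruct (Hu (eps / 2)) as [N HN]; [lra|]. exists N. intros n k Hn Hk.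
  replace (vsub (u n) (u k)) with (vadd (vsub (u n) l) (vsub l (u k))) by veq.
  pose proof (norm_triangle (vsub (u n) l) (vsub l (u k))) as Htri.
  rewrite (norm_sub_sym l) in Htri. pose proof (HN n Hn). pose proof (HN k Hk). lra.
Qed.

Lemma norm2_le (x f : X) : norm2 X x f <= norm x + norm f.
Proof.
  pose proof (norm_ge0 x). pose proof (norm_ge0 f).
  unfold norm2. fold (sqnorm x) (sqnorm f). rewrite <- !norm_sqr.
  rewrite <- (sqrt_square (norm x + norm f)) by lra. apply sqrt_le_1_alt. nra.
Qed.

Lemma closed_rel_limit (T : rel X) (u v : nat -> X) x f : closed_rel X T ->
  (forall n, T (u n) (v n)) -> converges u x -> converges v f -> T x f.
Proof.
  intros HT Huv Hu Hv. apply (HT u v x f Huv). intros eps He.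
  destruct (Hu (eps / 2)) as [N1 H1]; [lra|]. destruct (Hv (eps / 2)) as [N2 H2]; [lra|].
  exists (max N1 N2). intros n Hn. eapply Rle_lt_trans; [apply norm2_le|].
  specialize (H1 n ltac:(lia)). specialize (H2 n ltac:(lia)). lra.
Qed.

Section Minimizing_sequence.
Variable M : X -> Prop.
Hypothesis M_add : forall a b, M a -> M b -> M (vadd a b).
Hypothesis M_scal : forall c a, M a -> M (vscal c a).
Variables (y : X) (d : R) (m : nat -> X).
Hypothesis d_ge0 : 0 <= d.
Hypothesis d_lb : forall h, M h -> d <= norm (vsub y h).
Hypothesis m_in : forall n, M (m n).
Hypothesis m_approx : forall n, norm (vsub y (m n)) < d + / (INR n + 1).

Lemma minimizing_seq_cauchy : cauchy_seq m.
Proof.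
  intros eps He. set (K := 4 * d + 2).
  destruct (inv_INR_succ_eventually_lt (eps * eps / (2 * K))) as [N HN].
  { apply Rdiv_lt_0_compat; unfold K; nra. }
  exists N. intros n k Hn Hk.
  pose proof (inv_INR_succ_bounds n) as [Ha0 Ha1]. pose proof (inv_INR_succ_bounds k) as [Hb0 Hb1].
  assert (HK : K * (/ (INR n + 1) + / (INR k + 1)) < eps * eps).
  { pose proof (HN n Hn) as Ha. pose proof (HN k Hk) as Hb.
    apply (Rmult_lt_compat_l K) in Ha, Hb; try (unfold K; lra).
    replace (K * (eps * eps / (2 * K))) with (eps * eps / 2) in Ha, Hb by (field; unfold K; lra).
    lra. }
  set (mid := vscal (Cr (/ 2)) (vadd (m n) (m k))).
  pose proof (d_lb mid (M_scal _ _ (M_add _ _ (m_in n) (m_in k)))) as Hmid.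
  pose proof (parallelogram (vsub y (m k)) (vsub y (m n))) as Hp.
  replace (vadd (vsub y (m k)) (vsub y (m n))) with (vscal (Cr 2) (vsub y mid)) in Hp
    by (unfold mid; veq).
  replace (vsub (vsub y (m k)) (vsub y (m n))) with (vsub (m n) (m k)) in Hp by veq.
  rewrite sqnorm_scal in Hp. cunf. rewrite <- !norm_sqr in Hp.
  pose proof (m_approx n). pose proof (m_approx k).
  pose proof (norm_ge0 (vsub y (m n))). pose proof (norm_ge0 (vsub y (m k))).
  pose proof (norm_ge0 (vsub (m n) (m k))).
  unfold K in HK. nra.
Qed.

Lemma minimizing_seq_limit l : converges m l -> norm (vsub y l) <= d.
Proof.
  intro Hl. apply Rle_plus_epsilon. intros eps He.
  destruct (inv_INR_succ_eventually_lt (eps / 2)) as [N1 H1]; [lra|].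
  destruct (Hl (eps / 2)) as [N2 H2]; [lra|].
  set (n := max N1 N2).
  replace (vsub y l) with (vadd (vsub y (m n)) (vsub (m n) l)) by veq.
  pose proof (norm_triangle (vsub y (m n)) (vsub (m n) l)).
  pose proof (H1 n ltac:(lia)). pose proof (H2 n ltac:(lia)). pose proof (m_approx n). lra.
Qed.

End Minimizing_sequence.

Lemma nearest_point_exists (M : X -> Prop) :
  M vzero -> (forall a b, M a -> M b -> M (vadd a b)) -> (forall c a, M a -> M (vscal c a)) ->
  (forall u l, (forall n, M (u n)) -> converges u l -> M l) ->
  forall y, exists l, M l /\ forall h, M h -> norm (vsub y l) <= norm (vsub y h).
Proof.
  intros M0 Madd Mscal Mcl y.
  destruct (nonneg_inf_exists (fun r => exists h, M h /\ r = norm (vsub y h)))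
    as [d [Hd0 [Hlb Happrox]]].
  { exists (norm (vsub y vzero)), vzero. auto. }
  { intros r [h [_ ->]]. apply norm_ge0. }
  destruct (choice (fun n h => M h /\ norm (vsub y h) < d + / (INR n + 1))) as [m Hm].
  { intro n. destruct (Happrox _ (proj1 (inv_INR_succ_bounds n))) as [r [[h [Mh ->]] Hr]].
    exists h. auto. }
  assert (Hlb' : forall h, M h -> d <= norm (vsub y h)) by (intros h Mh; apply Hlb; eauto).
  destruct (cauchy_seq_converges m) as [l Hl].
  { apply (minimizing_seq_cauchy M Madd Mscal y d); auto; apply Hm. }
  exists l. split.
  - apply (Mcl m l); auto. apply Hm.
  - intros h Mh. eapply Rle_trans; [|apply Hlb', Mh].
    apply (minimizing_seq_limit y d m); auto. apply Hm.
Qed.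

Lemma ip_eq0_of_norm_min (r w : X) :
  (forall c, norm r <= norm (vsub r (vscal c w))) -> ip r w = C0.
Proof.
  intro Hmin.
  assert (Hsq : forall c, sqnorm r <= sqnorm (vsub r (vscal c w))).
  { intro c. rewrite <- !norm_sqr. pose proof (Hmin c). pose proof (norm_ge0 r). nra. }
  pose proof (sqnorm_ge0 w) as Hw. pose proof (ip_pos_im X w) as Hwi.
  apply C_ext; apply (lin_coef_eq0_of_quad_ge0 _ (sqnorm w) Hw); intro s.
  - specialize (Hsq (Cr s)). revert Hsq. unfold sqnorm. ipexp. cunf.
    rewrite (Re_ip_sym r w), (Im_ip_sym r w), Hwi. intro. lra.
  - specialize (Hsq (Ci s)). revert Hsq. unfold sqnorm. ipexp. cunf.
    rewrite (Re_ip_sym r w), (Im_ip_sym r w), Hwi. intro. lra.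
Qed.

Theorem orth_projection_exists (M : X -> Prop) :
  M vzero -> (forall a b, M a -> M b -> M (vadd a b)) -> (forall c a, M a -> M (vscal c a)) ->
  (forall u l, (forall n, M (u n)) -> converges u l -> M l) ->
  forall y, exists l, M l /\ forall w, M w -> ip (vsub y l) w = C0.
Proof.
  intros M0 Madd Mscal Mcl y.
  destruct (nearest_point_exists M M0 Madd Mscal Mcl y) as [l [Ml Hl]].
  exists l. split; [exact Ml|]. intros w Mw. apply ip_eq0_of_norm_min. intro c.
  replace (vsub (vsub y l) (vscal c w)) with (vsub y (vadd l (vscal c w))) by veq.
  apply Hl, Madd, Mscal; assumption.
Qed.

Lemma norm_le_norm2 (x f : X) : norm x <= norm2 X x f /\ norm f <= norm2 X x f.
Proof.
  pose proof (sqnorm_ge0 x). pose proof (sqnorm_ge0 f).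
  unfold norm, norm2. split; apply sqrt_le_1_alt; unfold sqnorm in *; lra.
Qed.

Lemma converges_of_norm2 (u v : nat -> X) x f :
  (forall eps, eps > 0 -> exists N, forall n, (n >= N)%nat ->
     norm2 X (vsub (u n) x) (vsub (v n) f) < eps) ->
  converges u x /\ converges v f.
Proof.
  intro H. split; intros eps He; destruct (H eps He) as [N HN]; exists N; intros n Hn;
    pose proof (norm_le_norm2 (vsub (u n) x) (vsub (v n) f)); pose proof (HN n Hn); lra.
Qed.

Lemma Re_ip_converges (u : nat -> X) y x :
  converges u y -> Un_cv (fun n => Re (ip (u n) x)) (Re (ip y x)).
Proof.
  intros Hu eps He. pose proof (norm_ge0 x).
  destruct (Hu (eps / (norm x + 1))) as [N HN]; [apply Rdiv_lt_0_compat; lra|].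
  exists N. intros n Hn. unfold R_dist.
  replace (Re (ip (u n) x) - Re (ip y x)) with (Re (ip (vsub (u n) y) x)) by (ipexp; cunf; ring).
  eapply Rle_lt_trans; [apply Rabs_Re_ip_le|].
  specialize (HN n Hn). pose proof (norm_ge0 (vsub (u n) y)).
  assert (eps / (norm x + 1) * (norm x + 1) = eps) by (field; lra). nra.
Qed.

Lemma Im_ip_converges (u : nat -> X) y x :
  converges u y -> Un_cv (fun n => Im (ip (u n) x)) (Im (ip y x)).
Proof.
  (* [Im <a, x> = Re <a, i x>] *)
  intros Hu eps He. destruct (Re_ip_converges u y (vscal (Ci 1) x) Hu eps He) as [N HN].
  exists N. intros n Hn. specialize (HN n Hn). revert HN. ipexp. cunf.
  assert (E : forall p q : R, 0 * p - - (1) * q = q) by (intros; ring).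
  rewrite !E. auto.
Qed.

Lemma adjoint_closed (T : rel X) : closed_rel X (adjoint X T).
Proof.
  intros u v y g Huv Hc x f Txf.
  destruct (converges_of_norm2 u v y g Hc) as [Hu Hv].
  assert (Hseq : forall n, ip (v n) x = ip (u n) f) by (intro n; apply Huv, Txf).
  apply C_ext.
  - apply (UL_sequence (fun n => Re (ip (v n) x))); [apply Re_ip_converges, Hv|].
    intros eps He. destruct (Re_ip_converges u y f Hu eps He) as [N HN].
    exists N. intros n Hn. rewrite Hseq. apply HN, Hn.
  - apply (UL_sequence (fun n => Im (ip (v n) x))); [apply Im_ip_converges, Hv|].
    intros eps He. destruct (Im_ip_converges u y f Hu eps He) as [N HN].
    exists N. intros n Hn. rewrite Hseq. apply HN, Hn.
Qed.

Lemma adjoint_sub (T : rel X) y g x f : adjoint X T y g -> adjoint X T x f ->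
  adjoint X T (vsub y x) (vsub g f).
Proof. intros H1 H2 u h Tuh. ipexp. rewrite (H1 u h Tuh), (H2 u h Tuh). reflexivity. Qed.

Lemma self_adjoint_hermitian (S : rel X) : self_adjoint X S -> hermitian X S.
Proof. intros H x f Sxf. apply H, Sxf. Qed.

Lemma self_adjoint_closed (S : rel X) : self_adjoint X S -> closed_rel X S.
Proof.
  intros H u v x f Huv Hc. apply H.
  apply (adjoint_closed S u v x f); [intro n; apply H, Huv | exact Hc].
Qed.

Lemma hermitian_ip_sym (T : rel X) x f : hermitian X T -> T x f -> ip f x = ip x f.
Proof. intros H Txf. exact (H x f Txf x f Txf). Qed.

Lemma subspace_sub (T : rel X) x f y g : is_subspace X T -> T x f -> T y g ->
  T (vsub x y) (vsub f g).
Proof.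
  intros [_ [Tadd Tscal]] Txf Tyg.
  replace (vsub x y) with (vadd x (vscal (Cr (-1)) y)) by veq.
  replace (vsub f g) with (vadd f (vscal (Cr (-1)) g)) by veq.
  apply Tadd, Tscal; assumption.
Qed.

Lemma rel_sum_subspace (S A : rel X) : is_subspace X S -> is_subspace X A ->
  is_subspace X (rel_sum X S A).
Proof.
  intros [S0 [Sadd Sscal]] [A0 [Aadd Ascal]]. split; [|split].
  - exists vzero, vzero. repeat split; auto. veq.
  - intros x h1 y h2 [f1 [g1 [H1 [H2 ->]]]] [f2 [g2 [H3 [H4 ->]]]].
    exists (vadd f1 f2), (vadd g1 g2). repeat split; auto. veq.
  - intros c x h [f [g [H1 [H2 ->]]]]. exists (vscal c f), (vscal c g). repeat split; auto. veq.
Qed.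

Lemma norm_sub_Ci_ge (x f : X) t : ip f x = ip x f ->
  norm f <= norm (vsub f (vscal (Ci t) x)) /\ Rabs t * norm x <= norm (vsub f (vscal (Ci t) x)).
Proof.
  intro Hsym. assert (Him : Im (ip f x) = 0).
  { pose proof (Im_ip_sym f x) as E. rewrite Hsym in E |- *. lra. }
  assert (E : sqnorm (vsub f (vscal (Ci t) x)) = sqnorm f + t * t * sqnorm x).
  { unfold sqnorm. ipexp. pose proof (ip_pos_im X x). cunf.
    rewrite (Re_ip_sym f x), (Im_ip_sym f x), Him, H. ring. }
  rewrite <- !norm_sqr in E.
  assert (Habs : Rabs t * Rabs t = t * t) by (unfold Rabs; destruct (Rcase_abs t); ring).
  pose proof (norm_ge0 f). pose proof (norm_ge0 x). pose proof (Rabs_pos t).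
  pose proof (norm_ge0 (vsub f (vscal (Ci t) x))). split; nra.
Qed.

Definition ran_shift (T : rel X) (t : R) (h : X) : Prop :=
  exists x f, T x f /\ h = vsub f (vscal (Ci t) x).

Lemma ran_shift_closed (T : rel X) t : is_subspace X T -> closed_rel X T -> hermitian X T ->
  t <> 0 -> forall u l, (forall n, ran_shift T t (u n)) -> converges u l -> ran_shift T t l.
Proof.
  intros HS HC HH Ht u l Hu Hl.
  destruct (choice (fun n (p : X * X) =>
    T (fst p) (snd p) /\ u n = vsub (snd p) (vscal (Ci t) (fst p)))) as [p Hp].
  { intro n. destruct (Hu n) as [x [f Hxf]]. exists (x, f). exact Hxf. }
  set (xs := fun n => fst (p n)). set (fs := fun n => snd (p n)).
  assert (Hta : 0 < Rabs t) by (apply Rabs_pos_lt; exact Ht).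
  assert (Hxs : cauchy_seq xs).
  { intros eps He. destruct (converges_cauchy_seq u l Hl (eps * Rabs t)) as [N HN]; [nra|].
    exists N. intros n k Hn Hk. specialize (HN n k Hn Hk).
    destruct (Hp n) as [Tn En]. destruct (Hp k) as [Tk Ek].
    pose proof (hermitian_ip_sym T _ _ HH (subspace_sub T _ _ _ _ HS Tn Tk)) as Hsym.
    destruct (norm_sub_Ci_ge _ _ t Hsym) as [_ Hle].
    replace (vsub (vsub (snd (p n)) (snd (p k))) (vscal (Ci t) (vsub (fst (p n)) (fst (p k)))))
      with (vsub (u n) (u k)) in Hle by (rewrite En, Ek; veq).
    unfold xs. nra. }
  destruct (cauchy_seq_converges xs Hxs) as [x Hx].
  exists x, (vadd l (vscal (Ci t) x)). split; [|veq].
  apply (closed_rel_limit T xs fs); [exact HC | intro n; apply Hp | exact Hx |].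
  intros eps He. destruct (Hl (eps / 2)) as [N1 H1]; [lra|].
  destruct (Hx (eps / (2 * Rabs t))) as [N2 H2]; [apply Rdiv_lt_0_compat; lra|].
  exists (max N1 N2). intros n Hn.
  specialize (H1 n ltac:(lia)). specialize (H2 n ltac:(lia)). destruct (Hp n) as [_ En].
  replace (vsub (fs n) (vadd l (vscal (Ci t) x)))
    with (vadd (vsub (u n) l) (vscal (Ci t) (vsub (xs n) x))) by (unfold fs, xs; rewrite En; veq).
  eapply Rle_lt_trans; [apply norm_triangle|]. rewrite norm_scal_Ci.
  assert (Rabs t * (eps / (2 * Rabs t)) = eps / 2) by (field; lra). nra.
Qed.

Lemma ran_shift_full (T : rel X) t : is_subspace X T -> closed_rel X T -> hermitian X T ->
  t <> 0 -> (forall v, (forall h, ran_shift T t h -> ip h v = C0) -> v = vzero) ->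
  forall h, ran_shift T t h.
Proof.
  intros HS HC HH Ht Horth h. pose proof HS as [T0 [Tadd Tscal]].
  destruct (orth_projection_exists (ran_shift T t)) with (y := h) as [m [Mm Hm]].
  - exists vzero, vzero. split; [exact T0 | veq].
  - intros a b [x1 [f1 [T1 ->]]] [x2 [f2 [T2 ->]]].
    exists (vadd x1 x2), (vadd f1 f2). split; [apply Tadd; assumption | veq].
  - intros c a [x1 [f1 [T1 ->]]]. exists (vscal c x1), (vscal c f1).
    split; [apply Tscal; assumption | veq].
  - apply ran_shift_closed; assumption.
  - replace h with m; [exact Mm|]. symmetry. apply vsub_eq0, Horth.
    intros w Mw. rewrite ip_conj_sym, Hm by exact Mw. ceq.
Qed.

Lemma self_adjoint_ran_shift_orth (S : rel X) t : self_adjoint X S -> t <> 0 ->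
  forall w, (forall h, ran_shift S t h -> ip h w = C0) -> w = vzero.
Proof.
  intros HS Ht w Hw.
  assert (Sw : S w (vscal (Ci (- t)) w)).
  { apply HS. intros x f Sxf. assert (E : ip (vsub f (vscal (Ci t) x)) w = C0).
    { apply Hw. exists x, f. auto. }
    revert E. ipexp. rewrite (ip_conj_sym X f w), (ip_conj_sym X x w). intro E.
    apply C_ext; cunf; injection E; intros; lra. }
  pose proof (hermitian_ip_sym S _ _ (self_adjoint_hermitian S HS) Sw) as E.
  revert E. ipexp. intro E. apply (f_equal Im) in E. cunf.
  apply ip_definite. nra.
Qed.

Lemma self_adjoint_ran_shift_full (S : rel X) t : is_subspace X S -> self_adjoint X S ->
  t <> 0 -> forall h, ran_shift S t h.
Proof.
  intros HS HSa Ht. apply ran_shift_full; auto.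
  - apply self_adjoint_closed, HSa.
  - apply self_adjoint_hermitian, HSa.
  - apply self_adjoint_ran_shift_orth; assumption.
Qed.

Lemma self_adjoint_of_ran_shift_full (T : rel X) t : hermitian X T ->
  (forall h, ran_shift T t h) -> (forall h, ran_shift T (- t) h) -> self_adjoint X T.
Proof.
  intros HH Hran Hran' y g. split; [apply HH|]. intro Hadj.
  destruct (Hran (vsub g (vscal (Ci t) y))) as [x [f [Txf E1]]].
  assert (Hg : g = vadd (vsub f (vscal (Ci t) x)) (vscal (Ci t) y)) by (rewrite <- E1; veq).
  subst g. pose proof (adjoint_sub T _ _ _ _ Hadj (HH x f Txf)) as Hw.
  replace (vsub (vadd (vsub f (vscal (Ci t) x)) (vscal (Ci t) y)) f)
    with (vscal (Ci t) (vsub y x)) in Hw by veq.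
  remember (vsub y x) as w eqn:Ew.
  destruct (Hran' w) as [u [h [Tuh E2]]].
  assert (Hww : ip w w = C0).
  { pose proof (Hw u h Tuh) as E3. rewrite E2 at 2. revert E3. ipexp. intros <-. ceq. }
  assert (y = x) by (apply vsub_eq0, ip_definite; rewrite <- Ew, Hww; reflexivity).
  subst y. replace (vadd (vsub f (vscal (Ci t) x)) (vscal (Ci t) x)) with f by veq. exact Txf.
Qed.

Lemma op_part_of_shift_orth (S : rel X) x f t : self_adjoint X S -> S x f ->
  orth X (mul0 X S) (vsub f (vscal (Ci t) x)) -> op_part X S x f.
Proof.
  intros HS Sxf Horth. split; [exact Sxf|]. intros g Sg.
  assert (E1 : ip g x = C0) by (rewrite (proj1 (HS vzero g) Sg x f Sxf); apply ip_zero_l).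
  pose proof (Horth g Sg) as E2. revert E2. ipexp. rewrite (ip_conj_sym X g x), E1. intro E2.
  apply C_ext; cunf; injection E2; intros; lra.
Qed.

Section Relatively_bounded_perturbation.
Variables (S A : rel X) (a b t : R).
Let QAs : rel X := rel_comp X (orth_proj X (orth X (mul0 X S))) (op_part X A).
Hypothesis S_subspace : is_subspace X S.
Hypothesis S_self_adjoint : self_adjoint X S.
Hypothesis A_subspace : is_subspace X A.
Hypothesis dom_QAs : forall x, dom X (op_part X S) x -> dom X QAs x.
Hypothesis QAs_bound :
  forall x f z, op_part X S x f -> QAs x z -> norm z <= a * norm f + b * norm x.
Hypothesis a_ge0 : 0 <= a.
Hypothesis b_ge0 : 0 <= b.
Hypothesis t_large : b < (1 - a) * Rabs t.

Lemma orth_mul0_of_orth_ran_sum v : (forall h, ran_shift (rel_sum X S A) t h -> ip h v = C0) ->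
  orth X (mul0 X S) v.
Proof.
  intros Hv g Sg. assert (E : ip (vsub (vadd g vzero) (vscal (Ci t) vzero)) v = C0).
  { apply Hv. exists vzero, (vadd g vzero). split; [|reflexivity].
    exists g, vzero. repeat split; [exact Sg | apply A_subspace]. }
  revert E. ipexp. rewrite ip_conj_sym. intro E. apply C_ext; cunf; injection E; intros; lra.
Qed.

Lemma rel_sum_ran_shift_orth v : (forall h, ran_shift (rel_sum X S A) t h -> ip h v = C0) ->
  v = vzero.
Proof.
  intro Hv. pose proof (Rabs_pos t) as Habs.
  assert (Ht : t <> 0) by (intro; subst t; rewrite Rabs_R0 in t_large; lra).
  pose proof (orth_mul0_of_orth_ran_sum v Hv) as Hvo.
  destruct (self_adjoint_ran_shift_full S t S_subspace S_self_adjoint Ht v) as [x [f [Sxf Ev]]].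
  assert (Hop : op_part X S x f)
    by (apply (op_part_of_shift_orth S x f t); [| |rewrite <- Ev]; assumption).
  destruct (dom_QAs x (ex_intro _ f Hop)) as [z Hz].
  pose proof (QAs_bound x f z Hop Hz) as Hzb.
  destruct Hz as [g [[Axg _] [_ Hproj]]].
  assert (Hvz : ip (vadd v z) v = C0).
  { assert (E3 : ip (vsub (vadd f g) (vscal (Ci t) x)) v = C0).
    { apply Hv. exists x, (vadd f g). split; [|reflexivity]. exists f, g. auto. }
    replace (vadd v z) with (vsub (vsub (vadd f g) (vscal (Ci t) x)) (vsub g z))
      by (rewrite Ev; veq).
    rewrite ip_sub_l, E3, (Hproj v Hvo). ceq. }
  apply norm_le_of_ip_add_eq0 in Hvz.
  pose proof (hermitian_ip_sym S x f (self_adjoint_hermitian S S_self_adjoint) Sxf) as Hsym.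
  destruct (norm_sub_Ci_ge x f t Hsym) as [Hf Hx]. rewrite <- Ev in Hf, Hx.
  pose proof (norm_ge0 v). pose proof (norm_ge0 x). pose proof (norm_ge0 f).
  assert (Rabs t * norm v <= a * Rabs t * norm v + b * norm v).
  { apply Rmult_le_compat_l with (r := Rabs t) in Hvz, Hzb; try assumption.
    apply Rmult_le_compat_l with (r := a) in Hf; nra. }
  apply norm_eq0. nra.
Qed.

End Relatively_bounded_perturbation.

End Hilbert_space.

Theorem theorem4p2 (X : Hilbert) (S A : rel X) :
  is_subspace X S -> self_adjoint X S ->
  is_subspace X A -> closed_rel X A -> hermitian X A ->
  closed_rel X (rel_sum X S A) -> hermitian X (rel_sum X S A) ->
  (forall x, dom X S x -> dom X A x) ->
  rel_bounded X (rel_comp X (orth_proj X (orth X (mul0 X S))) (op_part X A))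
                (op_part X S) ->
  rel_bound_lt X (rel_comp X (orth_proj X (orth X (mul0 X S))) (op_part X A))
               (op_part X S) 1 ->
  self_adjoint X (rel_sum X S A).
Proof.
  (* The relative bound already gives [D(S_s) ⊂ D(Q A_s)]. *)
  intros HS HSsa HA _ _ HTcl HTh _ [Hdom _] [beta [Hinf Hbeta]].
  destruct (is_inf_lt _ _ _ Hinf Hbeta) as [a [[Ha [b [Hb Hbound]]] Ha1]].
  set (t := (b + 1) / (1 - a)).
  assert (Ht : 0 < t) by (apply Rdiv_lt_0_compat; lra).
  assert (Hfull : forall s, Rabs s = t -> forall h, ran_shift X (rel_sum X S A) s h).
  { intros s Hs. assert (Hs0 : s <> 0) by (intro; subst s; rewrite Rabs_R0 in Hs; lra).
    apply ran_shift_full; [apply rel_sum_subspace | | | |]; try assumption.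
    apply (rel_sum_ran_shift_orth X S A a b s); try assumption.
    rewrite Hs. unfold t.
    replace ((1 - a) * ((b + 1) / (1 - a))) with (b + 1) by (field; lra). lra. }
  apply (self_adjoint_of_ran_shift_full X _ t HTh); apply Hfull.
  - apply Rabs_right. lra.
  - rewrite Rabs_Ropp. apply Rabs_right. lra.
Qed.
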